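(* Let $Q$ be a quiver and $C\subseteq\Bbbk Q$ a subcoalgebra, with tail closure $T(C)$. Every finite dimensional right coideal of $T(C)$ is contained in the right coideal $\langle q_F\rangle^{T(C)}$ generated by an element of the form $q_F$, for some $n\ge 0$ and some finite independent set $F\subseteq M(T^n(C))$.
   Context: $\Bbbk$ is a field. Paths of $Q$ include trivial paths (vertices); concatenation $xy$ is defined when the target of $x$ is the source of $y$, extended bilinearly. The path coalgebra $\Bbbk Q$ has basis all paths, $\Delta(p)=\sum_{xy=p}x\otimes y$, $\varepsilon(p)=1$ if $p$ trivial and $0$ otherwise. A right coideal of a coalgebra $D$ is a subspace $I$ with $\Delta(I)\subseteq I\otimes D$; $\langle x\rangle^D$ is the smallest right coideal of $D$ containing $x$. A multipath is a nonzero linear combination of paths with common source $s(p)$ and common target $t(p)$; $M(D)$ is the set of multipaths in $D$; $F\subseteq M(D)$ is independent if it is linearly independent and $\langle x\rangle^D\cap F=\{x\}$ for each $x\in F$. Tail closure: for a subcoalgebra $D$ of a path coalgebra $\Bbbk R$, let $\overline{R}$ be obtained from $R$ by adding, for each finite independent $F=\{p_1,\dots,p_n\}\subseteq M(D)$, a new vertex $e_F$ and new arrows $\alpha_{i,F}:t(p_i)\to e_F$; put $q_F=\sum_i p_i\alpha_{i,F}\in\Bbbk\overline{R}$ and let $\overline{D}\subseteq\Bbbk\overline{R}$ be the subcoalgebra generated by $D$ and all $q_F$. Set $T^0(C)=C$, $T^{n+1}(C)=\overline{T^n(C)}$ (over the quivers $T^0(Q)=Q$, $T^{n+1}(Q)=\overline{T^n(Q)}$),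 and $T(C)=\bigcup_nT^n(C)$; thus for finite independent $F\subseteq M(T^n(C))$, $q_F\in T^{n+1}(C)\subseteq T(C)$. *)

From HB Require Import structures.
From mathcomp Require Import all_boot all_algebra.
From Stdlib Require Import ClassicalEpsilon List.

Set Implicit Arguments.
Unset Strict Implicit.
Unset Printing Implicit Defensive.

Import GRing.Theory.
Local Open Scope ring_scope.

Record quiver := Quiver {
  qV : Type; qA : Type; qsrc : qA -> qV; qtgt : qA -> qV }.

(* A raw path is a starting vertex and a list of arrows; the trivial path
   at v is (v, [::]). *)
Definition rpath (Q : quiver) : Type := (qV Q * list (qA Q))%type.

Fixpoint validl (Q : quiver) (v : qV Q) (l : list (qA Q)) : Prop :=
  match l with
  | [::] => True
  | a :: l' => qsrc a = v /\ validl (qtgt a) l'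
  end.

Definition valid (Q : quiver) (p : rpath Q) : Prop := validl p.1 p.2.
Definition psrc (Q : quiver) (p : rpath Q) : qV Q := p.1.
Definition ptgt (Q : quiver) (p : rpath Q) : qV Q :=
  fold_left (fun _ a => qtgt a) p.2 p.1.

(* The path coalgebra k Q: finitely supported functions on valid paths *)
Section PathCoalg.
Variable K : fieldType.
Variable Q : quiver.

Definition vec := rpath Q -> K.
Definition vzero : vec := fun _ => 0.
Definition vadd (x y : vec) : vec := fun p => x p + y p.
Definition vscale (c : K) (x : vec) : vec := fun p => c * x p.

Definition in_pc (x : vec) : Prop :=
  (exists s : list (rpath Q), forall p, x p <> 0 -> List.In p s) /\
  (forall p, x p <> 0 -> valid p).

(* comultiplication: coefficient of a (x) b in Delta(x) is the coefficient
   of the concatenation ab in x when ab is defined, 0 otherwise. *)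
Definition delta (x : vec) (a b : rpath Q) : K :=
  if excluded_middle_informative (valid a /\ valid b /\ ptgt a = psrc b)
  then x (a.1, a.2 ++ b.2) else 0.

Definition subspace (S : vec -> Prop) : Prop :=
  S vzero /\ (forall x y, S x -> S y -> S (vadd x y)) /\
  (forall c x, S x -> S (vscale c x)).

Definition in_tensor (I D : vec -> Prop) (phi : rpath Q -> rpath Q -> K) : Prop :=
  exists l : list (vec * vec),
    (forall z, List.In z l -> I z.1 /\ D z.2) /\
    (forall a b, phi a b = \sum_(z <- l) z.1 a * z.2 b).

Definition subcoalgebra (D : vec -> Prop) : Prop :=
  subspace D /\ (forall x, D x -> in_pc x) /\
  (forall x, D x -> in_tensor D D (delta x)).

Definition right_coideal (D I : vec -> Prop) : Prop :=
  subspace I /\ (forall x, I x -> D x) /\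
  (forall x, I x -> in_tensor I D (delta x)).

Definition gen_rcoideal (D : vec -> Prop) (x : vec) : vec -> Prop :=
  fun y => forall I, right_coideal D I -> I x -> I y.

Definition gen_subcoalg (S : vec -> Prop) : vec -> Prop :=
  fun y => forall E, subcoalgebra E -> (forall x, S x -> E x) -> E y.

Definition multipath (D : vec -> Prop) (x : vec) : Prop :=
  D x /\ x <> vzero /\
  (exists s, forall p, x p <> 0 -> psrc p = s) /\
  (exists t, forall p, x p <> 0 -> ptgt p = t).

Definition finite_set (F : vec -> Prop) : Prop :=
  exists s : list vec, forall x, F x -> List.In x s.

Definition lin_indep (F : vec -> Prop) : Prop :=
  forall l : list (K * vec), List.NoDup (map snd l) ->
    (forall z, List.In z l -> F z.2) ->
    (forall p, \sum_(z <- l) z.1 * z.2 p = 0) ->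
    forall z, List.In z l -> z.1 = 0.

Definition independent (D : vec -> Prop) (F : vec -> Prop) : Prop :=
  (forall x, F x -> multipath D x) /\ lin_indep F /\
  (forall x y, F x -> F y -> gen_rcoideal D x y -> y = x).

Definition finite_dim (I : vec -> Prop) : Prop :=
  exists B : list vec, forall y, I y ->
    exists cl : list (K * vec), (forall z, List.In z cl -> List.In z.2 B) /\
      (forall p, y p = \sum_(z <- cl) z.1 * z.2 p).

End PathCoalg.

Section Bar.
Variable K : fieldType.
Variable Q : quiver.
Variable D : vec K Q -> Prop.

(* index of the new vertices e_F: finite independent F subset of M(D) *)
Record fidx := FIdx {
  fset : vec K Q -> Prop;
  fset_fin : finite_set fset;
  fset_ind : independent D fset }.

(* index of the new arrows alpha_{p,F}, p in F *)
Record aidx := AIdx { aF : fidx; ap : vec K Q; ap_in : fset aF ap }.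

Definition mp_tgt (x : vec K Q) (H : multipath D x) : qV Q :=
  proj1_sig (constructive_indefinite_description _ (proj2 (proj2 (proj2 H)))).

Definition aidx_src (al : aidx) : qV Q :=
  mp_tgt (proj1 (fset_ind (aF al)) (ap al) (ap_in al)).

Definition barQ : quiver :=
  {| qV := (qV Q + fidx)%type; qA := (qA Q + aidx)%type;
     qsrc := fun a => match a with inl a' => inl (qsrc a')
                                 | inr al => inl (aidx_src al) end;
     qtgt := fun a => match a with inl a' => inl (qtgt a')
                                 | inr al => inr (aF al) end |}.

Fixpoint unl (A B : Type) (l : list (A + B)) : option (list A) :=
  match l with
  | [::] => Some [::]
  | inl a :: l' => omap (cons a) (unl l')
  | inr _ :: _ => None
  end.

Definition embf (x : vec K Q) : vec K barQ :=
  fun p => match p.1, unl p.2 with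
           | inl v, Some l => x (v, l)
           | _, _ => 0 end.

(* q_F = sum_{p in F} p alpha_{p,F} *)
Definition qF (F : fidx) : vec K barQ :=
  fun p => match rev p.2 with
           | inr al :: rest =>
               if excluded_middle_informative (aF al = F) then
                 match p.1, unl (rev rest) with
                 | inl v, Some l => ap al (v, l)
                 | _, _ => 0 end
               else 0
           | _ => 0 end.

Definition barD : vec K barQ -> Prop :=
  gen_subcoalg (fun y => (exists x, D x /\ y = embf x) \/ exists F, y = qF F).

End Bar.

Record stage (K : fieldType) := Stage { sQ : quiver; sD : vec K sQ -> Prop }.
Arguments sD {K} s _.
Arguments sQ {K} s.

Section Tower.
Variable K : fieldType.
Variable Q : quiver.
Variable C : vec K Q -> Prop.

Fixpoint T (n : nat) : stage K :=
  match n with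
  | 0 => Stage C
  | S m => @Stage K (barQ (@sD K (T m))) (@barD K (sQ (T m)) (@sD K (T m)))
  end.

(* vertices / arrows first appearing at stage n *)
Definition newV (n : nat) : Type :=
  match n with 0 => qV Q | S m => fidx (sD (T m)) end.
Definition newA (n : nat) : Type :=
  match n with 0 => qA Q | S m => aidx (sD (T m)) end.

Definition TV : Type := {n : nat & newV n}.
Definition TA : Type := {n : nat & newA n}.

Fixpoint liftV (n : nat) : qV (sQ (T n)) -> TV :=
  match n return qV (sQ (T n)) -> TV with
  | 0 => fun v => existT newV 0 v
  | S m => fun v => match v with
                    | inl v' => @liftV m v'
                    | inr F => existT newV (S m) F end
  end.

Fixpoint liftA (n : nat) : qA (sQ (T n)) -> TA :=
  match n return qA (sQ (T n)) -> TA with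
  | 0 => fun a => existT newA 0 a
  | S m => fun a => match a with
                    | inl a' => @liftA m a'
                    | inr al => existT newA (S m) al end
  end.

Definition injA (n : nat) : newA n -> qA (sQ (T n)) :=
  match n return newA n -> qA (sQ (T n)) with
  | 0 => fun a => a
  | S m => fun a => inr a
  end.

(* the quiver T(Q) = union of the T^n(Q) *)
Definition TQ : quiver :=
  {| qV := TV; qA := TA;
     qsrc := fun a => liftV (qsrc (injA (projT2 a)));
     qtgt := fun a => liftV (qtgt (injA (projT2 a))) |}.

Definition liftP (n : nat) (p : rpath (sQ (T n))) : rpath TQ :=
  (liftV p.1, map (@liftA n) p.2).

Definition liftf (n : nat) (x : vec K (sQ (T n))) : vec K TQ :=
  fun p => match excluded_middle_informative (exists p', p = liftP p') with
           | left H => x (proj1_sig (constructive_indefinite_description _ H))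
           | right _ => 0 end.

Definition TC : vec K TQ -> Prop :=
  fun y => exists n x, sD (T n) x /\ y = liftf x.

End Tower.

From Pilot Require Import Defs.
From HB Require Import structures.
From mathcomp Require Import all_boot all_algebra.
From mathcomp Require Import ring.
From Stdlib Require Import List Lia.
From Stdlib Require Import Classical ClassicalEpsilon ProofIrrelevance FunctionalExtensionality.

(* A finite dimensional right coideal I of T(C) is spanned by finitely many of
   its elements.  Each of them lies in some stage T^m(C) and is the sum of its
   components between fixed pairs of vertices, which are multipaths of T^m(C);
   all these multipaths can be pushed into one common stage T^n(C).  The
   resulting finite family is thinned, first to a linearly independent
   subfamily, then by discarding every member lying in the right coideal
   generated by another one.  What remains is a finite independent set F, and
   a right coideal containing F contains the whole family.  Finally, in
   Delta(q_F) the left tensor factor paired with the arrow alpha_{p,F} is p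
   itself, so a right coideal of T(C) containing q_F contains F, hence the
   family, hence I. *)

Set Implicit Arguments.
Unset Strict Implicit.
Unset Printing Implicit Defensive.
Import GRing.Theory.
Local Open Scope ring_scope.

Lemma skeleton_decomposition (K : fieldType) (P : Type) (phi : P -> P -> K) (A : list P) :
  (forall a b, phi a b <> 0 -> In a A) ->
  exists l : list (K * P * P), forall a b,
    phi a b = \sum_(z <- l) z.1.1 * phi a z.1.2 * phi z.2 b.
Proof.
elim: A phi => [|q A IH] phi supp.
  by exists [::] => a b; rewrite big_nil; apply/eqP/negPn/negP => /eqP /supp.
have [[p phi_qp]|row_q0] := classic (exists p, phi q p <> 0); last first.
  apply: IH => a b /[dup] /supp [<-|//] phi_ab.
  by case: row_q0; exists b.
pose d := phi q p.
(* One step of Gaussian elimination clears row [q]. *)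
pose phi' a b := phi a b - phi a p * phi q b / d.
have supp' : forall a b, phi' a b <> 0 -> In a A.
  move=> a b phi'_ab; have [a_q|a_nq] := classic (a = q).
    by case: phi'_ab; rewrite a_q /phi' /d; field; apply/eqP.
  have in_A : forall c, phi a c <> 0 -> In a A by move=> c /supp [/esym/a_nq|].
  have [phi_ab|/eqP/in_A//] := eqVneq (phi a b) 0.
  have [phi_ap|/eqP/in_A//] := eqVneq (phi a p) 0.
  by case: phi'_ab; rewrite /phi' phi_ab phi_ap !mul0r subrr.
have [l El] := IH phi' supp'.
pose expand (z : K * P * P) :=
  [:: (z.1.1, z.1.2, z.2);
      (- z.1.1 * phi z.2 p / d, z.1.2, q);
      (- z.1.1 * phi q z.1.2 / d, p, z.2);
      (z.1.1 * phi q z.1.2 * phi z.2 p / (d * d), p, q)].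
exists ((d^-1, p, q) :: flatten (map expand l)) => a b.
rewrite big_cons big_flatten /= big_map.
have -> : phi a b = phi' a b + phi a p * phi q b / d by rewrite /phi' subrK.
rewrite El addrC; congr (_ + _); first by rewrite /=; field; apply/eqP.
apply: eq_bigr => z _; rewrite !big_cons big_nil /= /phi'.
by field; apply/eqP.
Qed.

Section Span.
Variables (K : fieldType) (Q : quiver).
Local Notation vec := (vec K Q).

Definition in_span (G : list vec) (y : vec) : Prop :=
  exists cl : list (K * vec), (forall z, In z cl -> In z.2 G) /\
    (forall p, y p = \sum_(z <- cl) z.1 * z.2 p).

Lemma subspace_lincomb (S : vec -> Prop) (cl : list (K * vec)) :
  subspace S -> (forall z, In z cl -> S z.2) ->
  S (fun p => \sum_(z <- cl) z.1 * z.2 p).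
Proof.
move=> [S0 [SD SZ]]; elim: cl => [|z cl IH] Scl.
  by under [fun p => _]functional_extensionality do rewrite big_nil.
under [fun p => _]functional_extensionality do rewrite big_cons.
apply: SD; first by apply: SZ; apply: Scl; left.
by apply: IH => z' Hz'; apply: Scl; right.
Qed.

Lemma span_subspace (G : list vec) : subspace (in_span G).
Proof.
split; first by exists [::]; split => // p; rewrite big_nil.
split.
  move=> x y [cx [Gcx Ex]] [cy [Gcy Ey]]; exists (cx ++ cy); split.
    by move=> z /in_app_iff [/Gcx|/Gcy].
  by move=> p; rewrite /vadd Ex Ey big_cat.
move=> c x [cx [Gcx Ex]]; exists (map (fun z => (c * z.1, z.2)) cx); split.
  by move=> z /in_map_iff [z' [<- /Gcx]].
by move=> p; rewrite /vscale Ex big_map mulr_sumr; apply: eq_bigr => z _; rewrite mulrA.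
Qed.

Lemma span_mem (G : list vec) g : In g G -> in_span G g.
Proof.
by move=> Gg; exists [:: (1, g)]; split=> [z [<-|]//|p]; rewrite big_cons big_nil mul1r addr0.
Qed.

Lemma subspace_span (S : vec -> Prop) G y :
  subspace S -> (forall g, In g G -> S g) -> in_span G y -> S y.
Proof.
move=> HS SG [cl [Gcl Ey]].
have -> : y = fun p => \sum_(z <- cl) z.1 * z.2 p by apply: functional_extensionality.
by apply: subspace_lincomb => // z /Gcl /SG.
Qed.

Lemma span_trans (G H : list vec) y :
  (forall g, In g G -> in_span H g) -> in_span G y -> in_span H y.
Proof. exact: subspace_span (span_subspace H). Qed.

Lemma span_subset (G H : list vec) y :
  (forall g, In g G -> In g H) -> in_span G y -> in_span H y.
Proof. by move=> GH; apply: span_trans => g /GH /span_mem. Qed.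

Lemma span_cons (b : vec) B y :
  in_span (b :: B) y -> exists c, in_span B (fun p => y p - c * b p).
Proof.
move=> [cl [Gcl Ey]].
have -> : y = fun p => \sum_(z <- cl) z.1 * z.2 p by apply: functional_extensionality.
elim: cl Gcl {Ey} => [|z cl IH] Gcl.
  by exists 0, [::]; split => // p; rewrite !big_nil mul0r subrr.
have [c [cl' [Gcl' E']]] := IH (fun z' Hz' => Gcl z' (or_intror Hz')).
case: (Gcl z (or_introl erefl)) => [z_b|Bz].
  exists (c + z.1), cl'; split => // p.
  by rewrite big_cons -E' -z_b /=; ring.
exists c, (z :: cl'); split; first by move=> z' [<-|/Gcl'].
by move=> p; rewrite !big_cons -E'; ring.
Qed.

Lemma subspaceI (S S' : vec -> Prop) :
  subspace S -> subspace S' -> subspace (fun x => S x /\ S' x).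
Proof.
move=> [S0 [SD SZ]] [S'0 [S'D S'Z]]; split=> //; split.
  by move=> x y [? ?] [? ?]; split; [apply: SD|apply: S'D].
by move=> c x [? ?]; split; [apply: SZ|apply: S'Z].
Qed.

Lemma subspace_span_cons_exchange (W : vec -> Prop) b B y0 :
  subspace W -> (forall y, W y -> in_span (b :: B) y) -> W y0 -> ~ in_span B y0 ->
  forall y, W y -> exists c, W (fun p => y p - c * y0 p) /\ in_span B (fun p => y p - c * y0 p).
Proof.
move=> HW WB Wy0 By0 y Wy.
have [c0 B_y0] := span_cons (WB _ Wy0).
have [c B_y] := span_cons (WB _ Wy).
have c0_neq0 : c0 != 0.
  apply: contra_notN By0 => /eqP c0_0.
  suff -> : y0 = (fun p => y0 p - c0 * b p) by [].
  by apply: functional_extensionality => p; rewrite c0_0 mul0r subr0.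
case: HW => [_ [WD WZ]]; case: (span_subspace B) => [_ [BD BZ]].
exists (c / c0); split.
  have -> : (fun p => y p - c / c0 * y0 p) = vadd y (vscale (- (c / c0)) y0).
    by apply: functional_extensionality => p; rewrite /vadd /vscale mulNr.
  by apply: WD => //; apply: WZ.
have -> : (fun p => y p - c / c0 * y0 p) =
    vadd (fun p => y p - c * b p) (vscale (- (c / c0)) (fun p => y0 p - c0 * b p)).
  by apply: functional_extensionality => p; rewrite /vadd /vscale; field.
by apply: BD => //; apply: BZ.
Qed.

Lemma subspace_finitely_spanned (B : list vec) (W : vec -> Prop) :
  subspace W -> (forall y, W y -> in_span B y) ->
  exists L, (forall x, In x L -> W x) /\ forall y, W y -> in_span L y.
Proof.
elim: B W => [|b B IH] W HW WB.
  by exists [::]; split => // y /WB [cl [/= Bcl Ey]]; exists [::]; split.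
have [|W_nB] := classic (forall y, W y -> in_span B y); first exact: IH.
have [y0 [Wy0 By0]] : exists y0, W y0 /\ ~ in_span B y0.
  by apply: NNPP => nW; apply: W_nB => y Wy; apply: NNPP => By; apply: nW; exists y.
have [L [WL L_WB]] := IH _ (subspaceI HW (span_subspace B)) (fun y Wy => proj2 Wy).
exists (y0 :: L); split; first by move=> x [<-|/WL []].
move=> y Wy; have [c WBy] := subspace_span_cons_exchange HW WB Wy0 By0 Wy.
case: (span_subspace (y0 :: L)) => [_ [LD LZ]].
have -> : y = vadd (fun p => y p - c * y0 p) (vscale c y0).
  by apply: functional_extensionality => p; rewrite /vadd /vscale subrK.
apply: LD; first by apply: span_subset (L_WB _ WBy) => g Lg; right.
by apply: LZ; apply: span_mem; left.
Qed.

Lemma lin_indep_nil : lin_indep (fun x : vec => In x [::]).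
Proof. by move=> l _ l_nil _ z /l_nil. Qed.

Lemma lin_indep_cons (g : vec) G :
  lin_indep (fun x => In x G) -> ~ in_span G g -> lin_indep (fun x => In x (g :: G)).
Proof.
move=> indG nGg l uniq_l l_gG sum0.
have [[z0 [l_z0 z0_g]]|g_nl] := classic (exists z0, In z0 l /\ z0.2 = g); last first.
  by apply: indG => // z lz; case: (l_gG z lz) => // zg; case: g_nl; exists z.
have [l1 [l2 El]] := in_split _ _ l_z0; subst l.
move: uniq_l; rewrite !map_app /= z0_g => /(NoDup_remove _ _ _) [uniq' g_n'].
rewrite -map_app in uniq' g_n'.
have l'_G : forall z, In z (l1 ++ l2) -> In z.2 G.
  move=> z /in_app_iff lz.
  have /l_gG [zg|//] : In z (l1 ++ z0 :: l2) by apply/in_app_iff; case: lz; [left|right; right].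
  by case: g_n'; rewrite zg; apply: in_map; apply/in_app_iff.
have sum' : forall p, z0.1 * g p + \sum_(z <- l1 ++ l2) z.1 * z.2 p = 0.
  by move=> p; rewrite -[RHS](sum0 p) !big_cat big_cons /= z0_g; ring.
have z0_0 : z0.1 = 0.
  apply: NNPP => /eqP z0_neq0; apply: nGg.
  exists (map (fun z => (- z0.1^-1 * z.1, z.2)) (l1 ++ l2)); split.
    by move=> z /in_map_iff [z' [<- /l'_G]].
  move=> p; rewrite big_map.
  have -> : g p = - z0.1^-1 * \sum_(z <- l1 ++ l2) z.1 * z.2 p.
    apply: (mulfI z0_neq0); rewrite mulrA mulrN mulfV // mulN1r.
    by apply/eqP; rewrite -addr_eq0; apply/eqP.
  by rewrite mulr_sumr; apply: eq_bigr => z _; rewrite mulrA.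
have rest0 : forall z, In z (l1 ++ l2) -> z.1 = 0.
  by apply: indG => // p; move: (sum' p); rewrite z0_0 mul0r add0r.
by move=> z /in_app_iff [l1z|[<-|l2z]] //; apply: rest0; apply/in_app_iff; [left|right].
Qed.

Lemma lin_indep_sub (F F' : vec -> Prop) :
  (forall x, F x -> F' x) -> lin_indep F' -> lin_indep F.
Proof. by move=> FF' indF' l uniq_l lF; apply: indF' => // z /lF /FF'. Qed.

Lemma lin_indep_subfamily (G0 : list vec) : exists G1,
  (forall x, In x G1 -> In x G0) /\ lin_indep (fun x => In x G1) /\
  forall g, In g G0 -> in_span G1 g.
Proof.
elim: G0 => [|g G0 [G1 [G1_G0 [indG1 G1_span]]]].
  by exists [::]; split => //; split => //; exact: lin_indep_nil.
have [G1g|nG1g] := classic (in_span G1 g).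
  exists G1; split; first by move=> x /G1_G0; right.
  by split => // h [<-|/G1_span].
exists (g :: G1); split; first by move=> x [<-|/G1_G0]; [left|right].
split; first exact: lin_indep_cons.
move=> h [<-|/G1_span G1h]; first by apply: span_mem; left.
by apply: span_subset G1h => x G1x; right.
Qed.
End Span.

Section PathCoalgebra.
Variables (K : fieldType) (Q : quiver).
Local Notation vec := (vec K Q).

Lemma validl_cat (v : qV Q) l1 l2 :
  validl v (l1 ++ l2) <-> validl v l1 /\ validl (fold_left (fun _ a => qtgt a) l1 v) l2.
Proof.
elim: l1 v => [|a l1 IH] v /=; first by split; [move=> H; split | case].
rewrite IH; split; [case=> ? [] ? ?|case=> [[] ? ? ?]]; by repeat split.
Qed.

Lemma deltaE (x : vec) a b : (forall p, x p <> 0 -> valid p) ->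
  delta x a b = if excluded_middle_informative (ptgt a = psrc b)
                then x (a.1, a.2 ++ b.2) else 0.
Proof.
move=> x_valid; rewrite /delta.
case: excluded_middle_informative => [[va [vb ab]]|not_valid];
  case: excluded_middle_informative => //= ab.
have [//|/eqP/x_valid] := eqVneq (x (a.1, a.2 ++ b.2)) 0.
rewrite /valid /= validl_cat => -[va vb]; case: not_valid; do 2 split => //.
by rewrite /valid -[b.1]ab.
Qed.

Lemma delta_neq0_valid (x : vec) a b : delta x a b <> 0 -> valid a /\ valid b.
Proof. by rewrite /delta; case: excluded_middle_informative => [[? []]|]. Qed.

Lemma in_tensor_col (L R : vec -> Prop) phi :
  subspace L -> in_tensor L R phi -> forall p, L (fun a => phi a p).
Proof.
move=> HL [l [LRl Ephi]] p.
have -> : (fun a => phi a p) = fun a => \sum_(z <- map (fun z => (z.2 p, z.1)) l) z.1 * z.2 a.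
  apply: functional_extensionality => a; rewrite Ephi big_map.
  by apply: eq_bigr => z _; rewrite mulrC.
by apply: subspace_lincomb => // z /in_map_iff [z' [<- /LRl []]].
Qed.

Lemma in_tensor_row (L R : vec -> Prop) phi :
  subspace R -> in_tensor L R phi -> forall q, R (fun b => phi q b).
Proof.
move=> HR [l [LRl Ephi]] q.
have -> : (fun b => phi q b) = fun b => \sum_(z <- map (fun z => (z.1 q, z.2)) l) z.1 * z.2 b.
  by apply: functional_extensionality => b; rewrite Ephi big_map.
by apply: subspace_lincomb => // z /in_map_iff [z' [<- /LRl []]].
Qed.

Lemma in_tensor_slices (L R : vec -> Prop) phi A :
  subspace L -> subspace R -> (forall a b, phi a b <> 0 -> In a A) ->
  (forall p, L (fun a => phi a p)) -> (forall q, R (fun b => phi q b)) ->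
  in_tensor L R phi.
Proof.
move=> [_ [_ LZ]] _ supp L_col R_row.
have [l El] := skeleton_decomposition supp.
exists (map (fun z => (vscale z.1.1 (fun a => phi a z.1.2), fun b => phi z.2 b)) l).
split; last by move=> a b; rewrite El big_map.
by move=> z /in_map_iff [z' [<- _]]; split; [apply: LZ|apply: R_row].
Qed.

Definition prefixes (S : list (rpath Q)) : list (rpath Q) :=
  flat_map (fun s => map (fun k => (s.1, firstn k s.2)) (seq 0 (length s.2).+1)) S.

Lemma delta_supp_prefixes (x : vec) S : (forall p, x p <> 0 -> In p S) ->
  forall a b, delta x a b <> 0 -> In a (prefixes S).
Proof.
move=> suppS a b; rewrite /delta; case: excluded_middle_informative => //= _ /suppS Sab.
apply/in_flat_map; exists (a.1, a.2 ++ b.2); split => //.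
apply/in_map_iff; exists (length a.2); split.
  by rewrite firstn_app firstn_all PeanoNat.Nat.sub_diag firstn_O app_nil_r; case: a {Sab}.
by apply in_seq; rewrite length_app; lia.
Qed.

Lemma in_pc_subspace : subspace (@in_pc K Q).
Proof.
have supp_add (x y : vec) p : vadd x y p <> 0 -> x p <> 0 \/ y p <> 0.
  rewrite /vadd => xy; apply: NNPP => /not_or_and [/NNPP x0 /NNPP y0].
  by apply: xy; rewrite x0 y0 addr0.
have supp_scale c (x : vec) p : vscale c x p <> 0 -> x p <> 0.
  by rewrite /vscale => cx x0; apply: cx; rewrite x0 mulr0.
split; first by split; [exists [::]|] => p []; rewrite /vzero.
split.
  move=> x y [[Sx suppx] validx] [[Sy suppy] validy]; split.
    by exists (Sx ++ Sy) => p /supp_add [/suppx|/suppy] ?; apply/in_app_iff; [left|right].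
  by move=> p /supp_add [/validx|/validy].
move=> c x [[Sx suppx] validx].
by split; [exists Sx|] => p /supp_scale; [apply: suppx|apply: validx].
Qed.

Lemma in_pc_subcoalgebra : subcoalgebra (@in_pc K Q).
Proof.
split; first exact: in_pc_subspace.
split=> // x [[S suppS] x_valid].
apply: (in_tensor_slices in_pc_subspace in_pc_subspace (delta_supp_prefixes suppS)).
  move=> p; split; last by move=> a /delta_neq0_valid [].
  by exists (prefixes S) => a; exact: delta_supp_prefixes suppS a p.
move=> q; split; last by move=> b /delta_neq0_valid [].
exists (map (fun s => (ptgt q, skipn (length q.2) s.2)) S) => b.
rewrite /delta; case: excluded_middle_informative => //= -[_ [_ qb]] /suppS Sqb.
apply/in_map_iff; exists (q.1, q.2 ++ b.2); split => //=.
by rewrite skipn_app skipn_all PeanoNat.Nat.sub_diag qb; case: b {qb Sqb}.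
Qed.

(* Equivalent to [subcoalgebra] by [in_tensor_slices], but evidently stable
   under intersections, hence inherited by [gen_subcoalg]. *)
Definition slice_closed (D : vec -> Prop) : Prop :=
  subspace D /\ (forall x, D x -> in_pc x) /\
  (forall x, D x -> forall p, D (fun a => delta x a p)) /\
  (forall x, D x -> forall q, D (fun b => delta x q b)).

Lemma subcoalgebra_slice_closed D : subcoalgebra D -> slice_closed D.
Proof.
move=> [HD [D_pc D_tensor]]; do 3 (split => //).
  by move=> x Dx; apply: in_tensor_col HD (D_tensor x Dx).
by move=> x Dx; apply: in_tensor_row HD (D_tensor x Dx).
Qed.

Lemma gen_subcoalg_slice_closed (S : vec -> Prop) :
  (forall x, S x -> in_pc x) -> slice_closed (gen_subcoalg S).
Proof.
move=> S_pc; split; last split; last split.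
- split; first by move=> E [[E0 _] _].
  split=> [x y Sx Sy|c x Sx] E HE SE; case: (HE) => [[_ [ED EZ]] _].
    by apply: ED; [apply: Sx|apply: Sy].
  by apply: EZ; apply: Sx.
- by move=> x Sx; apply: Sx _ in_pc_subcoalgebra S_pc.
- move=> x Sx p E HE SE; have [_ [_ [E_col _]]] := subcoalgebra_slice_closed HE.
  by apply: E_col; apply: Sx.
- move=> x Sx q E HE SE; have [_ [_ [_ E_row]]] := subcoalgebra_slice_closed HE.
  by apply: E_row; apply: Sx.
Qed.

Definition component (s t : qV Q) (x : vec) : vec :=
  fun a => if excluded_middle_informative (psrc a = s /\ ptgt a = t) then x a else 0.

Lemma component_mem D s t x : slice_closed D -> D x -> D (component s t x).
Proof.
move=> [_ [D_pc [D_col D_row]]] Dx.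
have x_valid : forall p, x p <> 0 -> valid p by case: (D_pc x Dx).
pose col := fun a => delta x a (t, [::]).
have col_valid : forall p, col p <> 0 -> valid p by move=> p /delta_neq0_valid [].
(* Slicing at the trivial paths [e_t], then [e_s], cuts out the (s,t)-component. *)
have -> : component s t x = fun b => delta col (s, [::]) b.
  apply: functional_extensionality => -[b1 b2].
  rewrite (deltaE _ _ col_valid) /col (deltaE _ _ x_valid) /component /psrc /ptgt /= app_nil_r.
  case: (excluded_middle_informative (s = b1)) => [sb|sb] /=; first subst b1.
    by case: excluded_middle_informative => [[ss st]|nst];
      case: excluded_middle_informative => // st'; case: nst.
  by case: excluded_middle_informative => // -[b1s b1t]; case: sb; rewrite b1s.
by apply: D_row; apply: D_col.
Qed.

Lemma multipath_decomposition D S x : slice_closed D -> D x ->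
  (forall p, x p <> 0 -> In p S) ->
  exists G, (forall g, In g G -> multipath D g) /\ in_span G x.
Proof.
move=> HD; case: (HD) => [[_ [DD DZ]] _].
elim: S x => [|p S IH] x Dx suppS.
  exists [::]; split => //; exists [::]; split => // q; rewrite big_nil.
  by apply/eqP/negPn/negP => /eqP /suppS.
pose c := component (psrc p) (ptgt p) x.
pose r := vadd x (vscale (-1) c).
have Dc : D c by apply: component_mem.
have Dr : D r by apply: DD => //; apply: DZ.
have suppS_r : forall a, r a <> 0 -> In a S.
  move=> a; rewrite /r /vadd /vscale /c /component.
  case: excluded_middle_informative => [pa|not_pa]; first by rewrite mulN1r subrr.
  by rewrite mulr0 addr0 => /suppS [pa|//]; case: not_pa; rewrite -pa.
have [G [G_mp [cl [Gcl Ecl]]]] := IH r Dr suppS_r.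
have [c0|c_neq0] := classic (c = @vzero K Q).
  exists G; split => //; exists cl; split => // q.
  by rewrite -Ecl /r /vadd /vscale c0 /vzero mulr0 addr0.
exists (c :: G); split.
  move=> g [<-|/G_mp //]; do 3 (split => //).
    by exists (psrc p) => a; rewrite /c /component; case: excluded_middle_informative => // -[].
  by exists (ptgt p) => a; rewrite /c /component; case: excluded_middle_informative => // -[].
exists ((1, c) :: cl); split; first by move=> z [<-|/Gcl ?]; [left|right].
by move=> q; rewrite big_cons -Ecl /r /vadd /vscale /=; ring.
Qed.
End PathCoalgebra.

Section TailStep.
Variables (K : fieldType) (Q : quiver) (D : vec K Q -> Prop).
Local Notation BQ := (barQ D).
Local Notation embf := (@embf K Q D).

Definition embp (p : rpath Q) : rpath BQ := (inl p.1, map inl p.2).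

Lemma fold_tgt_inl (l : list (qA Q)) (v : qV Q) :
  fold_left (fun _ a => @qtgt BQ a) (map inl l) (inl v) =
  inl (fold_left (fun _ a => qtgt a) l v).
Proof. by elim: l v => //= a l IH v; rewrite IH. Qed.

Lemma ptgt_embp p : ptgt (embp p) = inl (ptgt p).
Proof. exact: fold_tgt_inl. Qed.

Lemma validl_inl (l : list (qA Q)) (v : qV Q) : @validl BQ (inl v) (map inl l) <-> validl v l.
Proof.
elim: l v => //= a l IH v; rewrite IH.
by split=> -[av lv]; split=> //; [case: av|rewrite av].
Qed.

Lemma unl_map_inl (l : list (qA Q)) : @unl (qA Q) (aidx D) (map inl l) = Some l.
Proof. by elim: l => //= a l ->. Qed.

Lemma unl_Some (l' : list (qA Q + aidx D)) l : unl l' = Some l -> l' = map inl l.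
Proof.
elim: l' l => [|[a|al] l' IH] l //=; first by case=> <-.
by case E: (unl l') => [l2|] //= [<-]; rewrite (IH _ E).
Qed.

Lemma embf_embp x p : embf x (embp p) = x p.
Proof. by case: p => v l; rewrite /embf /= unl_map_inl. Qed.

Lemma embf_supp x p : embf x p <> 0 -> exists r, p = embp r /\ x r <> 0.
Proof.
case: p => [[v|e] l'] //=; rewrite /embf /=.
case E: (unl l') => [l|] // xvl; exists (v, l); split => //.
by rewrite /embp /= -(unl_Some E).
Qed.

Lemma embf_in_pc x : in_pc x -> in_pc (embf x).
Proof.
move=> [[S suppS] x_valid]; split.
  by exists (map embp S) => p /embf_supp [r [-> /suppS]]; apply: in_map.
by move=> p /embf_supp [r [-> /x_valid]]; rewrite /valid /= validl_inl.
Qed.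

Lemma embf_multipath x : multipath D x -> multipath (@barD K Q D) (embf x).
Proof.
move=> [Dx [x_neq0 [[s xs] [t xt]]]]; split.
  by move=> E HE SE; apply: SE; left; exists x.
split.
  move=> x0; apply: x_neq0; apply: functional_extensionality => p.
  by rewrite /vzero -(embf_embp x p) x0.
split; first by exists (inl s) => p /embf_supp [r [-> /xs <-]].
by exists (inl t) => p /embf_supp [r [-> /xt <-]]; rewrite ptgt_embp.
Qed.

Lemma mp_tgtP x (mx : multipath D x) p : x p <> 0 -> ptgt p = mp_tgt mx.
Proof. by rewrite /mp_tgt; case: constructive_indefinite_description => t xt /=; apply: xt. Qed.

Lemma qF_supp (F : fidx D) p : qF F p <> 0 ->
  exists al v l, p = (inl v, map inl l ++ [:: inr al]) /\ aF al = F /\ ap al (v, l) <> 0.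
Proof.
case: p => p1 p2; rewrite /qF /=.
case E: (rev p2) => [|[a|al] rest] //.
case: excluded_middle_informative => //= alF.
case: p1 => [v|e] //.
case E2: (unl (rev rest)) => [l|] // al_vl.
exists al, v, l; split => //.
by rewrite -[p2]rev_involutive E /= (unl_Some E2).
Qed.

Lemma qF_in_pc (F : fidx D) : (forall x, D x -> in_pc x) -> in_pc (qF F).
Proof.
move=> D_pc.
have F_pc : forall f, fset F f -> in_pc f.
  by move=> f Ff; apply: D_pc; case: (proj1 (fset_ind F) f Ff).
case: (fset_fin F) => sF sF_F.
pose supp f (Ff : fset F f) :=
  proj1_sig (constructive_indefinite_description _ (proj1 (F_pc f Ff))).
have suppP : forall f (Ff : fset F f) s, f s <> 0 -> In s (supp f Ff).
  by move=> f Ff s; rewrite /supp; case: constructive_indefinite_description => S HS /=; apply: HS.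
split.
  exists (flat_map (fun f => match excluded_middle_informative (fset F f) with
            | left Ff => map (fun s => (inl s.1, map inl s.2 ++ [:: inr (AIdx Ff)])) (supp f Ff)
            | right _ => [::] end) sF).
  move=> p /qF_supp [[F' f Ff'] [v [l [-> [/= F'F f_vl]]]]]; subst F'.
  apply/in_flat_map; exists f; split; first exact: sF_F.
  case: excluded_middle_informative => [Ff|//].
  rewrite (proof_irrelevance _ Ff' Ff).
  by apply/in_map_iff; exists (v, l); split => //; apply: suppP.
move=> p /qF_supp [[F' f Ff'] [v [l [-> [/= F'F f_vl]]]]]; subst F'.
have f_valid : valid (v, l) by case: (F_pc f Ff') => _; apply.
rewrite /valid /= validl_cat; split; first by apply/validl_inl.
rewrite fold_tgt_inl /=; split => //.
by rewrite /aidx_src /= -(mp_tgtP _ f_vl).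
Qed.

Lemma delta_qF_arrow (F : fidx D) f (Ff : fset F f) :
  (forall x, D x -> in_pc x) ->
  (fun a => delta (qF F) a (inl (aidx_src (AIdx Ff)), [:: inr (AIdx Ff)])) = embf f.
Proof.
move=> D_pc; apply: functional_extensionality => a.
have qF_valid : forall p, qF F p <> 0 -> valid p by case: (qF_in_pc F D_pc).
rewrite (deltaE _ _ qF_valid).
have -> : qF F (a.1, a.2 ++ [:: inr (AIdx Ff)]) = embf f a.
  rewrite /qF /= rev_unit.
  by case: excluded_middle_informative => [_|[]] //=; rewrite rev_involutive.
case: excluded_middle_informative => [//|a_tgt] /=.
have [//|/eqP/embf_supp [r [Er f_r]]] := eqVneq (embf f a) 0.
by case: a_tgt; rewrite Er ptgt_embp /psrc /= (mp_tgtP (proj1 (fset_ind F) f Ff) f_r).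
Qed.
End TailStep.

Lemma irredundant_sublist (A : Type) (R : A -> A -> Prop) (G1 : list A) :
  exists G, (forall x, In x G -> In x G1) /\
    (forall x y, In x G -> In y G -> R x y -> y = x) /\
    forall P : A -> Prop, (forall x y, P x -> R x y -> P y) ->
      (forall g, In g G -> P g) -> forall g, In g G1 -> P g.
Proof.
have [k] : exists k, (length G1 <= k)%coq_nat by exists (length G1).
elim: k G1 => [|k IH] G1 G1_k.
  by case: G1 G1_k => [_|a l /= ?]; [exists [::]|lia].
have [[x [y [G1x [G1y [yx Rxy]]]]]|irr] :=
  classic (exists x y, In x G1 /\ In y G1 /\ y <> x /\ R x y); last first.
  exists G1; split=> //; split=> [x y G1x G1y Rxy|//].
  by apply: NNPP => yx; apply: irr; exists x, y.
pose eq_dec (a b : A) := excluded_middle_informative (a = b).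
have G1'_k : (length (remove eq_dec y G1) <= k)%coq_nat.
  by have := remove_length_lt eq_dec G1 y G1y; lia.
have [G [GG1' [G_irr G_gen]]] := IH _ G1'_k.
exists G; split; first by move=> z /GG1' /(in_remove _ _ _ _) [].
split=> // P P_R PG g G1g.
have P_G1' := G_gen P P_R PG.
have [->|gy] := classic (g = y); last by apply: P_G1'; apply: in_in_remove.
by apply: P_R Rxy; apply: P_G1'; apply: in_in_remove => // xy; case: yx.
Qed.

Lemma existT_nat_inj (T : nat -> Type) n {x y : T n} : existT T n x = existT T n y -> x = y.
Proof. exact: Eqdep_dec.inj_pair2_eq_dec PeanoNat.Nat.eq_dec T n x y. Qed.

Section Tower.
Variables (K : fieldType) (Q : quiver) (C : vec K Q -> Prop).
Hypothesis HC : subcoalgebra C.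

Local Notation TT := (@T K Q C).
Local Notation DD n := (sD (TT n)).
Local Notation QQ n := (sQ (TT n)).
Local Notation TQ := (@TQ K Q C).
Local Notation liftf := (@liftf K Q C _).

Lemma stage_slice_closed n : slice_closed (DD n).
Proof.
elim: n => [|n IH] /=; first exact: subcoalgebra_slice_closed.
have [_ [D_pc _]] := IH.
apply: gen_subcoalg_slice_closed => y [[x [Dx ->]]|[F ->]].
  by apply: embf_in_pc; apply: D_pc.
exact: qF_in_pc.
Qed.

Lemma liftV_stage n (v : qV (QQ n)) : (projT1 (@liftV K Q C n v) <= n)%N.
Proof. by elim: n v => [|n IH] //= [v|F] //=; apply: leq_trans (IH v) _. Qed.

Lemma liftA_stage n (a : qA (QQ n)) : (projT1 (@liftA K Q C n a) <= n)%N.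
Proof. by elim: n a => [|n IH] //= [a|al] //=; apply: leq_trans (IH a) _. Qed.

Lemma liftV_inj n : injective (@liftV K Q C n).
Proof.
elim: n => [|n IH] /=; first by move=> x1 x2; apply: existT_nat_inj.
move=> [v1|F1] [v2|F2] E.
- by rewrite (IH _ _ E).
- by have := liftV_stage v1; rewrite E /= ltnn.
- by have := liftV_stage v2; rewrite -E /= ltnn.
- by rewrite (existT_nat_inj E).
Qed.

Lemma liftA_inj n : injective (@liftA K Q C n).
Proof.
elim: n => [|n IH] /=; first by move=> x1 x2; apply: existT_nat_inj.
move=> [a1|al1] [a2|al2] E.
- by rewrite (IH _ _ E).
- by have := liftA_stage a1; rewrite E /= ltnn.
- by have := liftA_stage a2; rewrite -E /= ltnn.
- by rewrite (existT_nat_inj E).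
Qed.

Lemma liftA_src n (a : qA (QQ n)) : @qsrc TQ (liftA a) = liftV (qsrc a).
Proof. by elim: n a => [|n IH] // [a|al] //=; apply: IH. Qed.

Lemma liftA_tgt n (a : qA (QQ n)) : @qtgt TQ (liftA a) = liftV (qtgt a).
Proof. by elim: n a => [|n IH] // [a|al] //=; apply: IH. Qed.

Lemma fold_tgt_lift n (l : list (qA (QQ n))) v :
  fold_left (fun _ a => @qtgt TQ a) (map (@liftA K Q C n) l) (liftV v) =
  liftV (fold_left (fun _ a => qtgt a) l v).
Proof. by elim: l v => //= a l IH v; rewrite -IH; congr (fold_left _ _ _); apply: liftA_tgt. Qed.

Lemma ptgt_liftP n (p : rpath (QQ n)) : ptgt (liftP p) = liftV (ptgt p).
Proof. exact: fold_tgt_lift. Qed.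

Lemma validl_lift n (l : list (qA (QQ n))) v :
  @validl TQ (liftV v) (map (@liftA K Q C n) l) <-> validl v l.
Proof.
elim: l v => [|a l IH] v //.
change (@qsrc TQ (liftA a) = liftV v /\ @validl TQ (@qtgt TQ (liftA a)) (map (@liftA K Q C n) l)
  <-> qsrc a = v /\ validl (qtgt a) l).
rewrite liftA_tgt IH liftA_src.
by split=> -[av lv]; split=> //; [apply: liftV_inj|rewrite av].
Qed.

Lemma liftP_inj n : injective (@liftP K Q C n).
Proof.
move=> [v1 l1] [v2 l2] [/liftV_inj -> E]; congr pair.
by elim: l1 l2 E => [|a l1 IH] [|b l2] //= [/liftA_inj -> /IH ->].
Qed.

Lemma liftfE n (x : vec K (QQ n)) p : liftf x (liftP p) = x p.
Proof.
rewrite /Defs.liftf; case: excluded_middle_informative => [lp|[]]; last by exists p.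
by case: constructive_indefinite_description => r /= /liftP_inj ->.
Qed.

Lemma liftf_out n (x : vec K (QQ n)) p :
  ~ (exists r : rpath (QQ n), p = liftP r) -> liftf x p = 0.
Proof. by rewrite /Defs.liftf; case: excluded_middle_informative. Qed.

Lemma liftf_supp n (x : vec K (QQ n)) p :
  liftf x p <> 0 -> exists r : rpath (QQ n), p = liftP r /\ x r <> 0.
Proof.
move=> xp; have [[r Er]|out] := classic (exists r : rpath (QQ n), p = liftP r).
  by exists r; split => //; rewrite -(liftfE x r) -Er.
by case: xp; apply: liftf_out.
Qed.

Lemma liftf_lincomb n (y : vec K (QQ n)) cl :
  (forall p, y p = \sum_(z <- cl) z.1 * z.2 p) ->
  forall p, liftf y p = \sum_(z <- cl) z.1 * liftf z.2 p.
Proof.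
move=> Ey p; have [[r ->]|out] := classic (exists r : rpath (QQ n), p = liftP r).
  by rewrite liftfE Ey; apply: eq_bigr => z _; rewrite liftfE.
by rewrite liftf_out // big1 // => z _; rewrite liftf_out // mulr0.
Qed.

Lemma liftf_span n (G : list (vec K (QQ n))) y :
  in_span G y -> in_span (map liftf G) (liftf y).
Proof.
move=> [cl [Gcl Ey]]; exists (map (fun z => (z.1, liftf z.2)) cl); split.
  by move=> z /in_map_iff [z' [<- /Gcl]]; apply: in_map.
by move=> p; rewrite (liftf_lincomb Ey) big_map.
Qed.

Lemma liftf_subspace n (J : vec K TQ -> Prop) :
  subspace J -> subspace (fun w : vec K (QQ n) => J (liftf w)).
Proof.
move=> [J0 [JD JZ]].
have lift0 : liftf (@vzero K (QQ n)) = @vzero K TQ.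
  apply: functional_extensionality => p.
  by rewrite (liftf_lincomb (cl := [::])) => [|q]; rewrite big_nil.
have liftD x y : liftf (vadd x y) = vadd (liftf x) (liftf y).
  apply: functional_extensionality => p; rewrite /vadd.
  rewrite (liftf_lincomb (cl := [:: (1, x); (1, y)])) => [|q];
    by rewrite !big_cons big_nil !mul1r addr0.
have liftZ c x : liftf (vscale c x) = vscale c (liftf x).
  apply: functional_extensionality => p; rewrite /vscale.
  by rewrite (liftf_lincomb (cl := [:: (c, x)])) => [|q]; rewrite big_cons big_nil addr0.
split; first by rewrite lift0.
by split=> [x y Jx Jy|c x Jx]; [rewrite liftD; apply: JD|rewrite liftZ; apply: JZ].
Qed.

Lemma liftf_valid n (x : vec K (QQ n)) : (forall p, x p <> 0 -> valid p) ->
  forall p, liftf x p <> 0 -> valid p.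
Proof.
by move=> x_valid p /liftf_supp [r [-> /x_valid]]; rewrite /valid /= validl_lift.
Qed.

Lemma delta_liftf_col n (x : vec K (QQ n)) p : (forall p, x p <> 0 -> valid p) ->
  (fun a => delta (liftf x) a (liftP p)) = liftf (fun a => delta x a p).
Proof.
move=> x_valid; apply: functional_extensionality => a'.
rewrite (deltaE _ _ (liftf_valid x_valid)).
have [[a ->]|out] := classic (exists a : rpath (QQ n), a' = liftP a).
  rewrite liftfE (deltaE _ _ x_valid) ptgt_liftP.
  have -> : ((liftP a).1, (liftP a).2 ++ (liftP p).2) = liftP (a.1, a.2 ++ p.2).
    by rewrite /liftP /= map_app.
  rewrite liftfE.
  case: excluded_middle_informative => [ap|nap];
    case: excluded_middle_informative => // ap'.
    by case: ap'; apply: liftV_inj.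
  by case: nap; rewrite ap'.
rewrite (liftf_out _ out).
case: excluded_middle_informative => [a_p|//] /=; clear a_p; apply: liftf_out => -[r Er].
(* [a'] is a prefix of the lifted path [r], hence itself lifted. *)
apply: out; exists (r.1, firstn (length a'.2) r.2).
case: a' Er => [a1 a2] /= [E1 E2]; rewrite /liftP /= -E1; congr pair.
by rewrite -firstn_map -E2 firstn_app firstn_all PeanoNat.Nat.sub_diag firstn_O app_nil_r.
Qed.

Lemma rcoideal_restrict n (J : vec K TQ -> Prop) : right_coideal (@TC K Q C) J ->
  right_coideal (DD n) (fun w => DD n w /\ J (liftf w)).
Proof.
move=> [HJ [_ J_tensor]].
have [HD [D_pc [D_col D_row]]] := stage_slice_closed n.
have HJn := subspaceI HD (liftf_subspace n HJ).
split=> //; split=> [w []//|w [Dw Jw]].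
have [[S suppS] w_valid] := D_pc w Dw.
apply: (in_tensor_slices HJn HD (delta_supp_prefixes suppS)) => [p|q]; last exact: D_row.
split; first exact: D_col.
by rewrite -delta_liftf_col //; apply: in_tensor_col HJ (J_tensor _ Jw) _.
Qed.

Lemma liftf_embf n (x : vec K (QQ n)) :
  @Defs.liftf K Q C n.+1 (@embf K (QQ n) (DD n) x) = liftf x.
Proof.
apply: functional_extensionality => p.
have lift_embp : forall r : rpath (QQ n),
    @liftP K Q C n.+1 (@embp K (QQ n) (DD n) r) = liftP r.
  by move=> r; rewrite /liftP /embp /= map_map.
have [[r ->]|out] := classic (exists r : rpath (QQ n), p = liftP r).
  by rewrite liftfE -lift_embp liftfE embf_embp.
rewrite (liftf_out _ out); apply/eqP/negPn/negP => /eqP.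
move=> /liftf_supp [p' [Ep /embf_supp [r [Er _]]]].
by apply: out; exists r; rewrite Ep Er lift_embp.
Qed.

Lemma rcoideal_qF_fset n (F : fidx (DD n)) f (J : vec K TQ -> Prop) :
  right_coideal (@TC K Q C) J -> J (@Defs.liftf K Q C n.+1 (qF F)) ->
  fset F f -> J (liftf f).
Proof.
move=> HJ Jq Ff.
have [HJn [_ Jn_tensor]] := rcoideal_restrict n.+1 HJ.
have Dq : DD n.+1 (qF F) by move=> E HE SE; apply: SE; right; exists F.
have [_ [D_pc _]] := stage_slice_closed n.
have [_] := in_tensor_col HJn (Jn_tensor _ (conj Dq Jq))
  (inl (aidx_src (AIdx Ff)), [:: inr (AIdx Ff)]).
by rewrite delta_qF_arrow // liftf_embf.
Qed.

Lemma multipath_lift_stage m n (x : vec K (QQ m)) : (m <= n)%N -> multipath (DD m) x ->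
  exists y : vec K (QQ n), multipath (DD n) y /\ liftf y = liftf x.
Proof.
move=> /subnK <- mp_x; elim: (n - m)%N => [|k [y [mp_y <-]]]; first by exists x.
exists (@embf K (QQ (k + m)) (DD (k + m)) y).
by split; [apply: embf_multipath|rewrite liftf_embf].
Qed.

Lemma multipaths_lift_stage m n (M : list (vec K (QQ m))) : (m <= n)%N ->
  (forall g, In g M -> multipath (DD m) g) ->
  exists M' : list (vec K (QQ n)),
    (forall g, In g M' -> multipath (DD n) g) /\ map liftf M' = map liftf M.
Proof.
move=> mn; elim: M => [|g M IH] mp_M; first by exists [::].
have [M' [mp_M' EM']] := IH (fun g' Mg' => mp_M g' (or_intror Mg')).
have [y [mp_y Ey]] := multipath_lift_stage mn (mp_M g (or_introl erefl)).
exists (y :: M'); split; first by move=> g' [<-|/mp_M'].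
by rewrite /= Ey EM'.
Qed.

Lemma TC_span_multipaths (L : list (vec K TQ)) : (forall l, In l L -> TC l) ->
  exists n (M : list (vec K (QQ n))), (forall g, In g M -> multipath (DD n) g) /\
    forall l, In l L -> in_span (map liftf M) l.
Proof.
elim: L => [|l L IH] TC_L; first by exists 0%N, [::].
have [n1 [M1 [mp_M1 M1_span]]] := IH (fun x Lx => TC_L x (or_intror Lx)).
have [m [x [Dx ->]]] := TC_L l (or_introl erefl).
have [_ [D_pc _]] := stage_slice_closed m.
have [[S suppS] _] := D_pc x Dx.
have [G [mp_G G_span]] := multipath_decomposition (stage_slice_closed m) Dx suppS.
have [M1' [mp_M1' EM1]] := multipaths_lift_stage (leq_maxl n1 m) mp_M1.
have [G' [mp_G' EG]] := multipaths_lift_stage (leq_maxr n1 m) mp_G.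
exists (maxn n1 m), (M1' ++ G'); split; first by move=> g /in_app_iff [/mp_M1'|/mp_G'].
rewrite map_app EG EM1 => l' [<-|Ll'].
  by apply: span_subset (liftf_span G_span) => g Gg; apply/in_app_iff; right.
by apply: span_subset (M1_span l' Ll') => g M1g; apply/in_app_iff; left.
Qed.

Lemma qF_generates_family n (G1 : list (vec K (QQ n))) :
  (forall g, In g G1 -> multipath (DD n) g) -> lin_indep (fun x => In x G1) ->
  exists F : fidx (DD n), forall J, right_coideal (@TC K Q C) J ->
    J (@Defs.liftf K Q C n.+1 (qF F)) -> forall g, In g G1 -> J (liftf g).
Proof.
move=> mp_G1 indG1.
have [G [G_G1 [G_irr G_gen]]] := irredundant_sublist (gen_rcoideal (DD n)) G1.
have indG : independent (DD n) (fun x => In x G).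
  split; first by move=> x /G_G1 /mp_G1.
  by split=> //; apply: lin_indep_sub indG1 => x /G_G1.
pose F := FIdx (ex_intro _ G (fun x Gx => Gx)) indG.
exists F => J HJ Jq.
pose Jn w := DD n w /\ J (liftf w).
have HJn : right_coideal (DD n) Jn := rcoideal_restrict n HJ.
suff Jn_G1 : forall g, In g G1 -> Jn g by move=> g /Jn_G1 [].
apply: G_gen => [x z Jnx /(_ Jn HJn Jnx)//|g Gg]; split.
  by have [] := mp_G1 g (G_G1 g Gg).
exact: (rcoideal_qF_fset (F := F) HJ Jq Gg).
Qed.
End Tower.

Theorem proposition4p25 (K : fieldType) (Q : quiver) (C : vec K Q -> Prop)
  (HC : @subcoalgebra K Q C)
  (I : vec K (@TQ K Q C) -> Prop)
  (HI : @right_coideal K (@TQ K Q C) (@TC K Q C) I)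
  (Hfin : @finite_dim K (@TQ K Q C) I) :
  exists (n : nat) (F : @fidx K (sQ (@T K Q C n)) (sD (@T K Q C n))),
    forall y, I y ->
      @gen_rcoideal K (@TQ K Q C) (@TC K Q C)
        (@liftf K Q C n.+1 (@qF K (sQ (@T K Q C n)) (sD (@T K Q C n)) F)) y.
Proof.
have [HIs [I_TC _]] := HI.
have [B I_B] := Hfin.
have [L [I_L L_span]] := subspace_finitely_spanned HIs I_B.
have [n [M [mp_M M_span]]] := TC_span_multipaths HC (fun l Ll => I_TC l (I_L l Ll)).
have [G1 [G1_M [indG1 G1_span]]] := lin_indep_subfamily M.
have [F F_gen] := qF_generates_family HC (fun g G1g => mp_M g (G1_M g G1g)) indG1.
exists n, F => y Iy J HJ Jq.
have J_M : forall g, In g M -> J (liftf g).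
  move=> g /G1_span /liftf_span; apply: subspace_span (proj1 HJ) _.
  by move=> _ /in_map_iff [g' [<- /(F_gen J HJ Jq)]].
apply: subspace_span (proj1 HJ) _ (L_span y Iy) => l /M_span.
by apply: subspace_span (proj1 HJ) _ => _ /in_map_iff [g [<- /J_M]].
Qed.
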